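(* Let $z\in\mathbb C\setminus\{0\}$, $\nu\in\mathrm{FA}(\partial\mathbb T)$ and $\gamma\in\mathrm{Aut}(\mathbb T)$. Then $\pi_z(\gamma)\nu=\nu$ if and only if $$z^{d(o,\iota(e))}\,\nu(\partial e)=z^{d(o,\iota(\gamma e))}\,\nu(\partial(\gamma e))$$ for every oriented edge $e$ of $\mathbb T$ that points away from $o$ and away from $\gamma^{-1}o$.
   Context: $\mathbb T$ is a locally finite tree without vertices of degree $\le1$, with graph metric $d$ on vertices and a fixed base vertex $o$. For an oriented edge $e$ with initial vertex $\iota(e)$ and terminal vertex $\tau(e)$, $e$ points away from a vertex $x$ if $d(x,\tau(e))=d(x,\iota(e))+1$. $\partial\mathbb T$ is the set of ends of $\mathbb T$ (equivalence classes of geodesic rays, two rays being equivalent if they share infinitely many edges); for every vertex $x$ and end $\omega$ there is a unique geodesic ray from $x$ to $\omega$. The forward set $\partial e\subseteq\partial\mathbb T$ of an oriented edge $e$ consists of the ends $\omega$ whose ray from $\iota(e)$ starts with $e$; forward sets form a basis of compact open sets of a compact totally disconnected topology on $\partial\mathbb T$. $\mathrm{FA}(\partial\mathbb T)$ is the space of finitely additive complex-valued set functions on the clopen subsets of $\partial\mathbb T$; a locally constant $g$ can be integrated: $\int_Ag\,d\nu=\sum_ig_i\nu(A_i)$ for a finite clopen partition $A=\bigsqcup A_i$ with $g\equiv g_i$ on $A_i$. For an end $\omega$ and vertices $x,y$, $h_\omega(x,y):=d(x,w)-d(y,w)$ for any vertex $w$ lying on both rays from $x$ and from $y$ to $\omega$.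 $\mathrm{Aut}(\mathbb T)$ acts on ends, and on $\mathrm{FA}(\partial\mathbb T)$ by $(\gamma\nu)(A)=\nu(\gamma^{-1}A)$. The twisted action is $(\pi_z(\gamma)\nu)(A):=\int_A c_\gamma\,d(\gamma\nu)$, where $c_\gamma(\omega)=z^{h_\omega(\gamma o,\,o)}$ (a locally constant function). *)

From HB Require Import structures.
From mathcomp Require Import all_boot all_order all_algebra.
From mathcomp Require Import boolp classical_sets.
From mathcomp Require Import Rstruct.
From mathcomp Require Import complex.
From Stdlib Require Import ClassicalEpsilon.
From Stdlib Require Reals.

Unset Strict Implicit.
Unset Printing Implicit Defensive.

Import Order.TTheory GRing.Theory Num.Theory.
Local Open Scope classical_set_scope.
Local Open Scope ring_scope.

Notation CC := (complex Rdefinitions.R).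

(* A graph on the vertex type [V] is given by an adjacency relation [adj].
   A walk from [x] is [x :: p] with [path adj x p]; it ends at [last x p]
   and has length [size p]. *)

Definition walk_of_length {V : eqType} (adj : rel V) (x y : V) (n : nat) : Prop :=
  exists p : seq V, [/\ path adj x p, last x p = y & size p = n].

Definition gdist {V : eqType} (adj : rel V) (x y : V) : nat :=
  xget 0%N [set n | walk_of_length adj x y n /\
                    forall m, walk_of_length adj x y m -> (n <= m)%N].

Definition simple_graph {V : eqType} (adj : rel V) : Prop :=
  (forall x y, adj x y = adj y x) /\ (forall x, ~~ adj x x).

Definition connected_graph {V : eqType} (adj : rel V) : Prop :=
  forall x y : V, exists p : seq V, path adj x p /\ last x p = y.

(* No cycles: there is no closed walk x, v1, ..., v_{n-1}, x with n >= 3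
   and x, v1, ..., v_{n-1} pairwise distinct. *)
Definition acyclic_graph {V : eqType} (adj : rel V) : Prop :=
  forall (x : V) (p : seq V),
    path adj x p -> last x p = x -> (3 <= size p)%N -> ~~ uniq p.

Definition is_tree {V : eqType} (adj : rel V) : Prop :=
  [/\ simple_graph adj, connected_graph adj & acyclic_graph adj].

Definition locally_finite {V : eqType} (adj : rel V) : Prop :=
  forall x : V, exists s : seq V, forall y, adj x y -> y \in s.

Definition no_leaves {V : eqType} (adj : rel V) : Prop :=
  forall x : V, exists y1 y2 : V, [/\ adj x y1, adj x y2 & y1 != y2].

(* An oriented edge is a pair e = (iota e, tau e) with adj e.1 e.2. *)
Definition oedge {V : eqType} (adj : rel V) (e : V * V) : Prop := adj e.1 e.2.

Definition points_away {V : eqType} (adj : rel V) (x : V) (e : V * V) : Prop :=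
  gdist adj x e.2 = (gdist adj x e.1).+1.

Definition is_aut {V : eqType} (adj : rel V) (g ginv : V -> V) : Prop :=
  [/\ cancel g ginv, cancel ginv g & forall x y, adj (g x) (g y) = adj x y].

Definition edge_act {V : eqType} (g : V -> V) (e : V * V) : V * V := (g e.1, g e.2).

Definition geod_ray {V : eqType} (adj : rel V) (r : nat -> V) : Prop :=
  forall i k : nat, gdist adj (r i) (r (i + k)%N) = k.

Definition edge_of_ray {V : eqType} (r' : nat -> V) (a b : V) : Prop :=
  exists m, (r' m = a /\ r' m.+1 = b) \/ (r' m = b /\ r' m.+1 = a).

Definition ray_equiv {V : eqType} (r r' : nat -> V) : Prop :=
  forall N : nat, exists n, (N <= n)%N /\ edge_of_ray r' (r n) (r n.+1).

Definition is_end {V : eqType} (adj : rel V) (E : set (nat -> V)) : Prop :=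
  exists r, geod_ray adj r /\ E = [set r' | geod_ray adj r' /\ ray_equiv r r'].

Definition End {V : eqType} (adj : rel V) : Type := {E : set (nat -> V) | is_end adj E}.

(* the ray from vertex x to the end w (unique) *)
Definition ray_to {V : eqType} {adj : rel V} (w : End adj) (x : V) (r : nat -> V) :=
  proj1_sig w r /\ r 0%N = x.

Definition fwd {V : eqType} (adj : rel V) (e : V * V) : set (End adj) :=
  [set w | exists r, ray_to w e.1 r /\ r 1%N = e.2].

(* the topology on the ends generated by the basis of forward sets *)
Definition end_open {V : eqType} {adj : rel V} (U : set (End adj)) : Prop :=
  forall w, U w -> exists e, [/\ oedge adj e, fwd adj e w & fwd adj e `<=` U].

Definition end_clopen {V : eqType} {adj : rel V} (U : set (End adj)) : Prop :=
  end_open U /\ end_open (~` U).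

(* action of an automorphism on ends, through preimages:
   g^-1 A = [set w | g w \in A], where g w is the class of g o r, r in w *)
Definition end_preim {V : eqType} {adj : rel V} (g : V -> V) (A : set (End adj))
  : set (End adj) :=
  [set w : End adj | exists w' : End adj, A w' /\ exists r : nat -> V, proj1_sig w r /\ proj1_sig w' (g \o r)].

(* Busemann / horofunction h_w(x, y) = d(x, v) - d(y, v) for any vertex v on
   both rays from x and from y to w *)
Definition on_both_rays {V : eqType} {adj : rel V} (w : End adj) (x y v : V) : Prop :=
  exists r r', [/\ ray_to w x r, ray_to w y r' & exists i j, r i = v /\ r' j = v].

Definition horo {V : eqType} {adj : rel V} (w : End adj) (x y : V) : int :=
  let v := epsilon (inhabits x) (on_both_rays w x y) in
  (gdist adj x v)%:Z - (gdist adj y v)%:Z.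

(* complex set functions on the clopen sets (values on other sets are irrelevant) *)
Definition is_FA {V : eqType} {adj : rel V} (nu : set (End adj) -> CC) : Prop :=
  forall A B, end_clopen A -> end_clopen B -> A `&` B = set0 ->
    nu (A `|` B) = nu A + nu B.

Definition fa_act {V : eqType} {adj : rel V} (g : V -> V) (nu : set (End adj) -> CC)
  : set (End adj) -> CC := fun A => nu (end_preim g A).

(* a finite clopen partition A = disjoint union of P i, with f constant = c i on P i *)
Definition lc_partition {V : eqType} {adj : rel V} (f : End adj -> CC) (A : set (End adj))
  (t : {n : nat & (('I_n -> set (End adj)) * ('I_n -> CC))%type}) : Prop :=
  let P := (projT2 t).1 in let c := (projT2 t).2 in
  [/\ forall i, end_clopen (P i),
      forall i j, i != j -> P i `&` P j = set0,
      forall w, A w <-> exists i, P i w &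
      forall i w, P i w -> f w = c i].

Definition fa_integral {V : eqType} {adj : rel V} (nu : set (End adj) -> CC)
  (f : End adj -> CC) (A : set (End adj)) : CC :=
  let t := epsilon
      (inhabits (existT (fun n => (('I_n -> set (End adj)) * ('I_n -> CC))%type) 0%N
                        (fun _ => set0, fun _ => 0)))
      (lc_partition f A) in
  \sum_(i < projT1 t) (projT2 t).2 i * nu ((projT2 t).1 i).

Definition cocycle {V : eqType} (adj : rel V) (o : V) (z : CC) (g : V -> V)
  : End adj -> CC := fun w => z ^ (horo w (g o) o).

Definition pi_z {V : eqType} {adj : rel V} (o : V) (z : CC) (g : V -> V)
  (nu : set (End adj) -> CC) : set (End adj) -> CC :=
  fun A => fa_integral (fa_act g nu) (cocycle adj o z g) A.

From mathcomp Require Import all_boot all_algebra.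
From mathcomp Require Import boolp classical_sets.
From mathcomp Require Import Rstruct complex.
From mathcomp Require Import zify ring.
From Stdlib Require Import ClassicalEpsilon.

(* Let e = (a, b) be an edge pointing away from both o and g o.  On its forward
   set the two rays to an end run through e, so the horofunction and hence the
   cocycle c_g are constant there, equal to z ^ (d(g o, a) - d(o, a)); thus
   pi_z(g) nu (fwd e) = z ^ (d(g o, a) - d(o, a)) * nu (fwd (g^-1 e)), and
   invariance on the clopen set fwd (g e) is exactly the edge identity for e.
   Conversely, the space of ends is compact (König's lemma, by local finiteness),
   so every clopen set is a finite disjoint union of forward sets of edges ending
   on one level beyond d(o, g o); all of them point away from o and g o.  The
   integral does not depend on the chosen partition, so invariance follows by
   summing the edge identities. *)

Set Implicit Arguments.
Unset Printing Implicit Defensive.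

Import GRing.Theory.
Local Open Scope classical_set_scope.

Lemma expfz_subn_mulE (F : fieldType) (z : F) (m n : nat) (x y : F) : (z != 0)%R ->
  (z ^ (m%:Z - n%:Z) * x = y)%R <-> (z ^+ m * x = z ^+ n * y)%R.
Proof.
move=> z0; have zn : (z ^+ n != 0)%R by rewrite expf_neq0.
rewrite expfzDr // -invr_expz -!exprnP.
by split => [<- | /(congr1 ( *%R (z ^+ n)^-1))]; [field | rewrite mulKf // => <-; ring].
Qed.

Lemma ex_minimal_nat (P : nat -> Prop) :
  (exists n, P n) -> exists n, P n /\ forall m, P m -> n <= m.
Proof.
move=> h; have hb : exists n, `[< P n >] by case: h => n hn; exists n; apply/asboolP.
exists (ex_minn hb); case: ex_minnP => m /asboolP hm hmin; split => // k hk.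
by apply: hmin; apply/asboolP.
Qed.

Section Tree.
Variables (V : eqType) (adj : rel V).
Hypothesis tree : is_tree adj.
Local Notation d := (gdist adj).

Definition is_walk (p : nat -> V) (n : nat) := forall i, i < n -> adj (p i) (p i.+1).

Lemma adjC x y : adj x y = adj y x.
Proof. by case: tree => [[]]. Qed.

Lemma adj_irrefl x : ~~ adj x x.
Proof. by case: tree => [[]]. Qed.

Lemma adj_neq x y : adj x y -> x != y.
Proof. by move=> h; apply/eqP=> e; move: h; rewrite e (negbTE (adj_irrefl y)). Qed.

Lemma walk_of_lengthP x y n :
  walk_of_length adj x y n <-> exists p, [/\ p 0 = x, p n = y & is_walk p n].
Proof.
split.
  case=> s [hp hl hs]; exists (fun i => nth x (x :: s) i); split => //.
    by rewrite -hs -last_nth.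
  by move=> i hi; move/(pathP x): hp => /(_ i); rewrite hs => /(_ hi).
case=> p [h0 hn hw]; exists (mkseq (fun i => p i.+1) n); split.
- apply/(pathP x) => i; rewrite size_mkseq => hi.
  rewrite nth_mkseq //=; case: i hi => [|i] hi /=; first by rewrite -h0; exact: hw.
  rewrite nth_mkseq; last by lia. exact: hw.
- rewrite (last_nth x) size_mkseq; case: n hn hw => [|n] hn hw /=; first by rewrite -hn.
  by rewrite nth_mkseq.
- by rewrite size_mkseq.
Qed.

Lemma gdist_spec x y : walk_of_length adj x y (d x y) /\
  forall m, walk_of_length adj x y m -> d x y <= m.
Proof.
rewrite /gdist; set S := [set n | _].
suff : exists n, S n by move=> /(xgetPex 0).
apply: ex_minimal_nat; case: tree => _ /(_ x y) [p [hp hl]] _.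
by exists (size p); exists p.
Qed.

Lemma gdist_walk_le p n : is_walk p n -> d (p 0) (p n) <= n.
Proof. by move=> h; apply: (proj2 (gdist_spec _ _)); apply/walk_of_lengthP; exists p. Qed.

Lemma shortest_walk x y : exists p, [/\ p 0 = x, p (d x y) = y & is_walk p (d x y)].
Proof. by apply/walk_of_lengthP; case: (gdist_spec x y). Qed.

Definition concat_walk (p q : nat -> V) (m i : nat) := if i <= m then p i else q (i - m).

Lemma concat_walk0 p q m : concat_walk p q m 0 = p 0.
Proof. by []. Qed.

Lemma concat_walk_end p q m n : p m = q 0 -> concat_walk p q m (m + n) = q n.
Proof.
move=> e; rewrite /concat_walk; case: leqP => h; last by rewrite addKn.
have -> : n = 0 by lia.
by rewrite addn0 e.
Qed.

Lemma concat_is_walk p q m n :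
  is_walk p m -> is_walk q n -> p m = q 0 -> is_walk (concat_walk p q m) (m + n).
Proof.
move=> hp hq e i hi; rewrite /concat_walk.
case: (ltnP i m) => him; first by rewrite (ltnW him); apply: hp.
case: (leqP i m) => him2.
  have -> : i = m by lia.
  by rewrite e subSn // subnn; apply: hq; lia.
by rewrite subSn; [apply: hq|]; lia.
Qed.

Lemma gdist_triangle x y z : d x z <= d x y + d y z.
Proof.
case: (shortest_walk x y) => p [p0 pn pw]; case: (shortest_walk y z) => q [q0 qn qw].
have e : p (d x y) = q 0 by rewrite pn q0.
by have := gdist_walk_le (concat_is_walk pw qw e); rewrite concat_walk0 concat_walk_end // p0 qn.
Qed.

Lemma gdistC x y : d x y = d y x.
Proof.
suff h : forall x y, d y x <= d x y by apply/eqP; rewrite eqn_leq !h.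
move=> {}x {}y; case: (shortest_walk x y) => p [p0 pn pw].
have hw : is_walk (fun i => p (d x y - i)) (d x y).
  move=> i hi; rewrite adjC; have -> : d x y - i = (d x y - i.+1).+1 by lia.
  apply: pw; lia.
by have := gdist_walk_le hw; rewrite subn0 pn subnn p0.
Qed.

Lemma gdistxx x : d x x = 0.
Proof. by apply/eqP; rewrite -leqn0; apply: (@gdist_walk_le (fun _ => x) 0). Qed.

Lemma gdist_eq0 x y : d x y = 0 -> x = y.
Proof. by move=> h; case: (shortest_walk x y) => p; rewrite h => -[<- <-]. Qed.

Lemma gdist_adj x y : adj x y -> d x y = 1.
Proof.
move=> h; apply/eqP; rewrite eqn_leq; apply/andP; split.
  by apply: (@gdist_walk_le (fun i => if i is 0 then x else y) 1); case.
by rewrite lt0n; apply/eqP => /gdist_eq0 e; move: (adj_neq h); rewrite e eqxx.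
Qed.

Lemma gdist1_adj x y : d x y = 1 -> adj x y.
Proof.
by move=> h; case: (shortest_walk x y) => p; rewrite h => -[<- <-]; apply.
Qed.

Lemma gdist_adj_le x y y' : adj y y' -> d x y' <= (d x y).+1.
Proof. by move=> h; have := gdist_triangle x y y'; rewrite (gdist_adj h) addn1. Qed.

(** * Geodesics *)

Definition geodesic x (p : nat -> V) n :=
  [/\ p 0 = x, is_walk p n & forall i, i <= n -> d x (p i) = i].

Lemma is_walk_shift p n i : is_walk p n -> is_walk (fun j => p (i + j)) (n - i).
Proof. by move=> h j hj; rewrite addnS; apply: h; lia. Qed.

Lemma is_walk_prefix p n {m} : is_walk p n -> m <= n -> is_walk p m.
Proof. by move=> h hm j hj; apply: h; lia. Qed.

Lemma gdist_walk_sub p n {i j} : is_walk p n -> i <= j -> j <= n -> d (p i) (p j) <= j - i.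
Proof.
move=> h hij hjn; have := gdist_walk_le (is_walk_shift i (is_walk_prefix h hjn)).
by rewrite addn0 subnKC.
Qed.

Lemma geodesic_exists x y : exists p, geodesic x p (d x y) /\ p (d x y) = y.
Proof.
case: (shortest_walk x y) => p [p0 pn pw]; exists p; split => //; split => // i hi.
apply/eqP; rewrite eqn_leq; apply/andP; split.
  by have := gdist_walk_sub pw (leq0n i) hi; rewrite p0 subn0.
have := gdist_triangle x (p i) y; have := gdist_walk_sub pw hi (leqnn _).
rewrite pn; lia.
Qed.

Lemma geodesic_gdist x p n {i j} : geodesic x p n -> i <= j -> j <= n -> d (p i) (p j) = j - i.
Proof.
case=> p0 pw pd hij hjn; apply/eqP; rewrite eqn_leq (gdist_walk_sub pw hij hjn) /=.
have := gdist_triangle x (p i) (p j); rewrite !pd //; lia.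
Qed.

Lemma geodesic_prefix x p n {m} : geodesic x p n -> m <= n -> geodesic x p m.
Proof.
by case=> p0 pw pd hm; split => // [|i hi]; [exact: is_walk_prefix pw hm | apply: pd; lia].
Qed.

Lemma no_simple_cycle x (c : nat -> V) n : c 0 = x -> c n = x -> is_walk c n -> 3 <= n ->
  {in gtn n &, injective (fun i => c i.+1)} -> False.
Proof.
move=> c0 cn cw hn hinj.
have hl : last x (mkseq (fun i => c i.+1) n) = x.
  rewrite (last_nth x) size_mkseq; move: cn hn; case: n {cw hinj} => [|n] cn hn //=.
  by rewrite nth_mkseq.
set s := mkseq _ n in hl *.
have hp : path adj x s.
  apply/(pathP x) => i; rewrite size_mkseq => hi.
  rewrite nth_mkseq //=; case: i hi => [|i] hi /=; first by rewrite -c0; exact: cw.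
  by rewrite nth_mkseq; [exact: cw | lia].
case: tree => _ _ /(_ x s hp hl); rewrite size_mkseq => /(_ hn).
by rewrite (introT (mkseq_uniqP _ _) hinj).
Qed.

(* The two branches after time [j.-1] and the edge [p M -- q L] would close a cycle. *)
Lemma geodesic_branches_not_adj x p q M L j : geodesic x p M -> geodesic x q L ->
  L <= M -> 1 <= j <= L -> p j.-1 = q j.-1 ->
  (forall i, j <= i <= L -> p i != q i) -> ~~ adj (p M) (q L).
Proof.
move=> [p0 pw pd] [q0 qw qd] hLM /andP[hj1 hjL] ej hne; apply/negP => ha.
pose c k := if k <= M - j + 1 then p (j.-1 + k) else q (L - (k - (M - j + 2))).
pose S := M + L - 2 * j + 3.
have dc k : k <= S ->
    d x (c k) = if k <= M - j + 1 then j.-1 + k else L - (k - (M - j + 2)).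
  by move=> hk; rewrite /c; case: ifP => h; [apply: pd | apply: qd]; lia.
apply: (@no_simple_cycle (p j.-1) c S).
- by rewrite /c leq0n addn0.
- rewrite /c /S ifN; last by rewrite -ltnNge; lia.
  by rewrite ej; congr q; lia.
- move=> k hk; rewrite /c.
  case: (ltnP k (M - j + 1)) => h1; first by rewrite (ltnW h1) addnS; apply: pw; lia.
  case: (leqP k (M - j + 1)) => h2.
    have -> : k = M - j + 1 by lia.
    have -> : j.-1 + (M - j + 1) = M by lia.
    by have -> : L - ((M - j + 1).+1 - (M - j + 2)) = L by lia.
  rewrite adjC; have -> : L - (k - (M - j + 2)) = (L - (k.+1 - (M - j + 2))).+1 by lia.
  apply: qw; lia.
- by rewrite /S; lia.
- move=> a b; rewrite !inE => ia ib e.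
  have e2 : d x (c a.+1) = d x (c b.+1) by rewrite e.
  rewrite !dc in e2; [|lia|lia].
  move: e; rewrite /c; case: ifP e2 => h1; case: ifP => h2 e2 e; try lia.
  + have hi : L - (b.+1 - (M - j + 2)) = j.-1 + a.+1 by lia.
    by move: (hne (j.-1 + a.+1) ltac:(lia)); rewrite e -hi eqxx.
  + have hi : L - (a.+1 - (M - j + 2)) = j.-1 + b.+1 by lia.
    by move: (hne (j.-1 + b.+1) ltac:(lia)); rewrite -e -hi eqxx.
Qed.

Lemma last_index_true (P : nat -> bool) n : P 0 ->
  exists k, [/\ k <= n, P k & forall i, k < i <= n -> ~~ P i].
Proof.
move=> h0; elim: n => [|n [k [hk hPk hi]]]; first by exists 0; split => // i; lia.
case hn : (P n.+1); first by exists n.+1; split => // i; lia.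
exists k; split => //; first lia.
move=> i /andP[h1 h2]; case: (ltnP i n.+1) => h3; first by apply: hi; lia.
have -> : i = n.+1 by lia.
by rewrite hn.
Qed.

Lemma geodesics_not_adj x p q M L : geodesic x p M -> geodesic x q L -> L <= M ->
  p L != q L -> ~~ adj (p M) (q L).
Proof.
move=> gp gq hLM hne.
have h0 : p 0 == q 0 by case: gp => -> _ _; case: gq => -> _ _.
have [k [hk hPk hk2]] := @last_index_true (fun i => p i == q i) L h0.
have hkL : k < L by case: ltngtP hk => // ek; move: hPk; rewrite ek (negbTE hne).
exact: geodesic_branches_not_adj k.+1 gp gq hLM ltac:(lia) (eqP hPk) hk2.
Qed.

Lemma geodesic_unique x n p q : geodesic x p n -> geodesic x q n -> p n = q n ->
  forall i, i <= n -> p i = q i.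
Proof.
elim: n p q => [|n IH] p q gp gq e i hi.
  have -> : i = 0 by lia.
  by case: gp => ->; case: gq => ->.
case: (ltnP i n.+1) => hin; last by have -> : i = n.+1 by lia.
suff en : p n = q n.
  by apply: IH => //; [exact: geodesic_prefix gp _ | exact: geodesic_prefix gq _].
apply/eqP/negPn/negP => hne; case: (gq) => _ qw _.
have := geodesics_not_adj gp (geodesic_prefix gq (leqnSn n)) (leqnSn n) hne.
by rewrite e adjC qw.
Qed.

Lemma gdist_adj_neq x u v : adj u v -> d x u != d x v.
Proof.
move=> h; apply/eqP => e.
case: (geodesic_exists x u) => p [gp pn]; case: (geodesic_exists x v) => q [gq qn].
rewrite e in gp pn.
by move: (geodesics_not_adj gp gq (leqnn _)); rewrite pn qn h => /(_ (adj_neq h)).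
Qed.

Lemma gdist_adjP x u v : adj u v -> d x v = (d x u).+1 \/ d x u = (d x v).+1.
Proof.
move=> h; have := gdist_adj_neq x h; have := gdist_adj_le x h.
rewrite adjC in h; have := gdist_adj_le x h; lia.
Qed.

Lemma geodesic_extend x p n v : geodesic x p n -> adj (p n) v -> d x v = n.+1 ->
  geodesic x (fun i => if i <= n then p i else v) n.+1.
Proof.
case=> p0 pw pd ha hv; split => // i hi.
  case: (ltnP i n) => h; first by rewrite (ltnW h); apply: pw.
  have -> : i = n by lia.
  by rewrite leqnn.
by case: leqP => h; [apply: pd | have -> : i = n.+1 by lia].
Qed.

Lemma parent_unique x u u' v : adj u v -> adj u' v ->
  d x v = (d x u).+1 -> d x v = (d x u').+1 -> u = u'.
Proof.
move=> h h' e e'.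
case: (geodesic_exists x u) => p [gp pn]; case: (geodesic_exists x u') => q [gq qn].
have eu : d x u' = d x u by lia.
rewrite eu in gq qn.
have gp' := geodesic_extend gp (etrans (f_equal2 adj pn erefl) h) e.
have gq' := geodesic_extend gq (etrans (f_equal2 adj qn erefl) h') e.
have := geodesic_unique gp' gq' _ (d x u) (leqnSn _).
by rewrite !leqnn ltnn pn qn; apply.
Qed.

Lemma nonbacktracking_gdist_incr x r n i : is_walk r n ->
  (forall k, k.+2 <= n -> r k.+2 != r k) ->
  i < n -> d x (r i.+1) = (d x (r i)).+1 ->
  forall k, i + k <= n -> d x (r (i + k)) = d x (r i) + k.
Proof.
move=> rw nb hi e.
have step k : i + k < n -> d x (r (i + k).+1) = (d x (r (i + k))).+1.
  elim: k => [|k IH] hk; first by rewrite addn0.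
  have a1 : adj (r (i + k)) (r (i + k).+1) by apply: rw; lia.
  have a2 : adj (r (i + k).+1) (r (i + k).+2) by apply: rw; lia.
  rewrite addnS; case: (gdist_adjP x a2) => // h; exfalso.
  rewrite adjC in a2; have := parent_unique x a2 a1 h (IH ltac:(lia)).
  by move/eqP; rewrite (negbTE (nb (i + k) ltac:(lia))).
elim=> [|k IH] hk; first by rewrite !addn0.
by rewrite addnS step; [rewrite IH|]; lia.
Qed.
(* The geodesic from [y] to [v], preceded by the edge [(p, v)], would be a
   non-backtracking walk leaving [x]; it could not come back to [y]. *)
Lemma points_away_closer x y p v : adj p v -> d x v = (d x p).+1 ->
  d x y <= d x p -> d y v = (d y p).+1.
Proof.
move=> hpv e hy; case: (gdist_adjP y hpv) => // h; exfalso.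
case: (geodesic_exists v y) => q [gq qm]; set m := d v y in gq qm.
have hm : d y v = m by rewrite /m gdistC.
case: (gq) => q0 qw qd.
pose W := concat_walk (fun i => if i is 0 then p else v) q 1.
have Ww : is_walk W (1 + m).
  by apply: concat_is_walk; rewrite ?q0 // => -[|i].
have WS k : W k.+1 = q k by rewrite /W -add1n concat_walk_end // q0.
have Wnb k : k.+2 <= 1 + m -> W k.+2 != W k.
  case: k => [|k] hk; rewrite !WS; apply/eqP => eq1.
    have := geodesic_gdist gq (i := 1) (j := m) ltac:(lia) (leqnn m).
    by rewrite eq1 qm /W concat_walk0 gdistC; lia.
  by have := qd k.+2 ltac:(lia); rewrite eq1 qd; lia.
have W1 : d x (W 1) = (d x (W 0)).+1 by rewrite WS q0.
have := @nonbacktracking_gdist_incr x W (1 + m) 0 Ww Wnb ltac:(lia) W1 (1 + m) ltac:(lia).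
by rewrite add0n add1n WS qm /W concat_walk0; lia.
Qed.

(** * Rays and ends *)

Definition shift (k : nat) (r : nat -> V) := fun n => r (k + n).

Lemma ray_gdist r {i j} : geod_ray adj r -> i <= j -> d (r i) (r j) = j - i.
Proof. by move=> h hij; rewrite -(subnKC hij) h addKn. Qed.

Lemma ray_adj r i : geod_ray adj r -> adj (r i) (r i.+1).
Proof. by move=> h; apply: gdist1_adj; rewrite -addn1 h. Qed.

Lemma ray_nonbacktracking r i : geod_ray adj r -> r i.+2 != r i.
Proof. by move=> h; apply/eqP => e; have := h i 2; rewrite addn2 e gdistxx. Qed.

Lemma ray_inj r {i j} : geod_ray adj r -> r i = r j -> i = j.
Proof.
move=> h e; case: (leqP i j) => hij.
  by have := ray_gdist h hij; rewrite e gdistxx; lia.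
by have := ray_gdist h (ltnW hij); rewrite e gdistxx; lia.
Qed.

Lemma ray_geodesic r n : geod_ray adj r -> geodesic (r 0) r n.
Proof. by move=> h; split => // [i _|i _]; [exact: ray_adj | rewrite -{2}(add0n i) h]. Qed.

Lemma shift_ray k r : geod_ray adj r -> geod_ray adj (shift k r).
Proof. by move=> h i j; rewrite /shift addnA h. Qed.

Lemma ray_gdist_incr x r : geod_ray adj r -> d x (r 1) = (d x (r 0)).+1 ->
  forall k, d x (r k) = d x (r 0) + k.
Proof.
move=> h e k.
have := @nonbacktracking_gdist_incr x r k.+1 0 (fun i _ => ray_adj i h)
  (fun i _ => ray_nonbacktracking i h) (ltn0Sn _) e k.
by rewrite add0n; apply.
Qed.

Lemma ray_eventually_incr x r : geod_ray adj r ->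
  exists K, forall t, d x (r (K + t)) = d x (r K) + t.
Proof.
move=> h; suff [K hK] : exists K, d x (r K.+1) = (d x (r K)).+1.
  exists K => t; have := ray_gdist_incr x (shift_ray K h).
  by rewrite /shift addn1 addn0; apply.
apply/not_existsP => hn.
have dec k : d x (r k) + k = d x (r 0).
  elim: k => [|k IH]; first by rewrite addn0.
  by case: (gdist_adjP x (ray_adj k h)) => e; [case: (hn k) | lia].
by have := dec (d x (r 0)).+1; lia.
Qed.

Lemma concat_ray x p r m : geodesic x p m -> geod_ray adj r -> r 0 = p m ->
  (forall k, d x (r k) = m + k) -> geod_ray adj (concat_walk p r m).
Proof.
move=> gp hr e hd i k; rewrite /concat_walk.
case: (leqP (i + k) m) => h1.
  by rewrite (leq_trans (leq_addr k i) h1) (geodesic_gdist gp (leq_addr k i) h1); lia.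
case: (leqP i m) => h2; last by have -> : i + k - m = (i - m) + k by lia.
apply/eqP; rewrite eqn_leq; apply/andP; split.
  have := gdist_triangle (p i) (p m) (r (i + k - m)).
  rewrite (geodesic_gdist gp h2 (leqnn m)) -e (ray_gdist hr (leq0n (i + k - m))); lia.
have := gdist_triangle x (p i) (r (i + k - m)).
by case: gp => _ _ ->; rewrite // hd; lia.
Qed.

Definition same_tail (r r' : nat -> V) := exists a b, forall n, r (n + a) = r' (n + b).

Lemma same_tail_refl r : same_tail r r.
Proof. by exists 0, 0. Qed.

Lemma same_tail_sym r r' : same_tail r r' -> same_tail r' r.
Proof. by case=> a [b h]; exists b, a => n; rewrite h. Qed.

Lemma same_tail_trans r1 r2 r3 : same_tail r1 r2 -> same_tail r2 r3 -> same_tail r1 r3.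
Proof.
case=> a [b h]; case=> c [e h']; exists (a + c), (e + b) => n.
have -> : n + (a + c) = (n + c) + a by lia.
rewrite h; have -> : n + c + b = (n + b) + c by lia.
by rewrite h'; congr r3; lia.
Qed.

Lemma same_tail_ray_equiv r r' : same_tail r r' -> ray_equiv r r'.
Proof.
case=> a [b h] N; exists (N + a); split; first exact: leq_addr.
by exists (N + b); left; split; rewrite -?addSn h.
Qed.

(* Far along [r], the shared vertices of [r] and [r'] all lie on one
   non-backtracking stretch of [r'], so [geodesic_unique] aligns the two rays. *)
Lemma ray_equiv_same_tail r r' : geod_ray adj r -> geod_ray adj r' ->
  ray_equiv r r' -> same_tail r r'.
Proof.
move=> hr hr' he; set x := r 0.
have shared N : exists n m, N <= n /\ r n = r' m.
  case: (he N) => n [hn [m [[e1 e2]|[e1 e2]]]]; first by exists n, m.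
  by exists n.+1, m; split => //; lia.
case: (ray_eventually_incr x hr') => K hK.
have bnd m : d x (r' m) <= d x (r' 0) + m.
  by have := gdist_triangle x (r' 0) (r' m); rewrite (ray_gdist hr' (leq0n m)) subn0.
have dr n : d x (r n) = n by rewrite /x -{2}(add0n n) hr.
pose N0 := d x (r' 0) + K + 1.
have big n m : N0 <= n -> r n = r' m -> K <= m /\ n + K = d x (r' K) + m.
  move=> hn e; have hm : K <= m.
    by case: (leqP K m) => // hmK; have := bnd m; rewrite -e dr; lia.
  by split => //; have := hK (m - K); rewrite subnKC // -e dr; lia.
case: (shared N0) => n1 [m1 [hn1 e1]]; have [hm1 c1] := big _ _ hn1 e1.
exists n1, m1 => t; rewrite addnC (addnC t).
case: (shared (n1 + t)) => n2 [m2 [hn2 e2]].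
have [hm2 c2] := big _ _ (leq_trans hn1 (leq_trans (leq_addr t n1) hn2)) e2.
pose L := n2 - n1.
have gp : geodesic (r n1) (shift n1 r) L.
  by have := ray_geodesic L (shift_ray n1 hr); rewrite /shift addn0.
have gq : geodesic (r n1) (shift m1 r') L.
  by have := ray_geodesic L (shift_ray m1 hr'); rewrite /shift addn0 e1.
apply: (geodesic_unique gp gq); last by rewrite /L; lia.
rewrite /shift; have -> : n1 + L = n2 by rewrite /L; lia.
by have -> : m1 + L = m2 by rewrite /L; lia.
Qed.

Local Notation End := (End adj).
Local Notation rays w := (proj1_sig w).

Lemma endP (w : End) : exists r0, geod_ray adj r0 /\
  rays w = [set r' | geod_ray adj r' /\ ray_equiv r0 r'].
Proof. by case: w => E [r0 [h e]]; exists r0. Qed.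

Lemma end_ray {w : End} {r} : rays w r -> geod_ray adj r.
Proof. by case: (endP w) => r0 [h ->] []. Qed.

Lemma end_same_tail {w : End} {r r'} : rays w r -> rays w r' -> same_tail r r'.
Proof.
case: (endP w) => r0 [h ->] [g1 e1] [g2 e2].
exact: same_tail_trans (same_tail_sym (ray_equiv_same_tail h g1 e1))
                       (ray_equiv_same_tail h g2 e2).
Qed.

Lemma end_same_tail_closed {w : End} {r r'} :
  rays w r -> geod_ray adj r' -> same_tail r r' -> rays w r'.
Proof.
case: (endP w) => r0 [h ->] [g1 e1] g2 t; split => //.
exact/same_tail_ray_equiv/(same_tail_trans (ray_equiv_same_tail h g1 e1)).
Qed.

Lemma end_nonempty (w : End) : exists r, rays w r.
Proof.
case: (endP w) => r0 [h ->]; exists r0; split => //.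
exact: same_tail_ray_equiv (same_tail_refl r0).
Qed.

Lemma end_eq {w w' : End} {r} : rays w r -> rays w' r -> w = w'.
Proof.
move=> h h'; have e : rays w = rays w'.
  apply/seteqP; split => r1 h1.
    exact: end_same_tail_closed h' (end_ray h1) (end_same_tail h h1).
  exact: end_same_tail_closed h (end_ray h1) (end_same_tail h' h1).
case: w w' e h h' => E p [E' p'] /= e _ _; subst E'.
by congr exist; apply: Prop_irrelevance.
Qed.

Definition end_of_ray r (h : geod_ray adj r) : End :=
  exist (is_end adj) [set r' | geod_ray adj r' /\ ray_equiv r r'] (ex_intro _ r (conj h erefl)).

Lemma end_of_rayP r (h : geod_ray adj r) : rays (end_of_ray h) r.
Proof. by split => //; exact: same_tail_ray_equiv (same_tail_refl r). Qed.

Lemma ray_to_exists (w : End) x : exists r, ray_to w x r.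
Proof.
case: (end_nonempty w) => r0 h0; have g0 := end_ray h0.
case: (ray_eventually_incr x g0) => K hK.
case: (geodesic_exists x (r0 K)) => p [gp pn].
have e : shift K r0 0 = p (d x (r0 K)) by rewrite /shift addn0 pn.
have hc := concat_ray gp (shift_ray K g0) e (fun k => hK k).
exists (concat_walk p (shift K r0) (d x (r0 K))); split; last by case: gp.
apply: end_same_tail_closed h0 hc _; exists K, (d x (r0 K)) => n.
by rewrite (addnC n (d x (r0 K))) concat_walk_end // /shift addnC.
Qed.

Lemma ray_to_unique {w : End} {x r r'} : ray_to w x r -> ray_to w x r' -> r = r'.
Proof.
move=> [h0 e0] [h1 e1]; have g0 := end_ray h0; have g1 := end_ray h1.
case: (end_same_tail h0 h1) => a [b hab].
have eab : a = b.
  have := hab 0; rewrite !add0n => e.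
  have := ray_gdist g0 (leq0n a); have := ray_gdist g1 (leq0n b).
  by rewrite e0 e1 e => ->; rewrite !subn0.
subst b; apply: funext => n; case: (leqP a n) => h.
  by have := hab (n - a); rewrite subnK.
have ga : geodesic x r a by rewrite -e0; apply: ray_geodesic.
have gb : geodesic x r' a by rewrite -e1; apply: ray_geodesic.
by apply: (geodesic_unique ga gb) => //; [have := hab 0; rewrite add0n | exact: ltnW].
Qed.

Lemma ray_to_shift {w : End} {a r} k : ray_to w a r -> ray_to w (r k) (shift k r).
Proof.
move=> [h r0]; split; last by rewrite /shift addn0.
apply: end_same_tail_closed h (shift_ray k (end_ray h)) _.
by exists k, 0 => n; rewrite /shift addn0 addnC.
Qed.

Lemma ray_to_fwd {w : End} x {u v r} : adj u v -> d x v = (d x u).+1 ->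
  fwd adj (u, v) w -> ray_to w x r -> r (d x u) = u /\ r (d x u).+1 = v.
Proof.
move=> a e [s [[hs s0] s1]] hr /=; have gs := end_ray hs.
case: (geodesic_exists x u) => p [gp pn].
have hd : forall k, d x (s k) = d x u + k.
  by have := ray_gdist_incr x gs; rewrite s0 s1 /=; apply.
have e0 : s 0 = p (d x u) by rewrite pn.
have hrc : ray_to w x (concat_walk p s (d x u)).
  split; last by rewrite concat_walk0; case: gp.
  apply: end_same_tail_closed hs (concat_ray gp gs e0 hd) _.
  by exists 0, (d x u) => n; rewrite addn0 addnC concat_walk_end.
rewrite (ray_to_unique hr hrc); split; first by rewrite /concat_walk leqnn.
by rewrite -addn1 concat_walk_end.
Qed.

(** * Forward sets and the topology of the ends *)

Lemma fwd_ray {w : End} {a r} : ray_to w a r -> fwd adj (a, r 1) w.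
Proof. by move=> h; exists r. Qed.

Lemma fwd_or_rev (w : End) a b : adj a b -> fwd adj (a, b) w \/ fwd adj (b, a) w.
Proof.
move=> hab; case: (ray_to_exists w a) => r hr.
case: (eqVneq (r 1) b) => e; first by left; rewrite -e; apply: fwd_ray hr.
right; case: hr => hr r0; have gr := end_ray hr.
have dba : d b a = 1 by rewrite gdistC (gdist_adj hab).
have hd1 : d b (r 1) = (d b (r 0)).+1.
  rewrite r0 dba; have := gdist_adjP b (ray_adj 0 gr); rewrite r0 dba => -[]// h.
  have h0 : d b (r 1) = 0 by lia.
  by move: e; rewrite -(gdist_eq0 _ _ h0) eqxx.
pose p i := if i is 0 then b else a.
have gp : geodesic b p 1.
  split => // [[|i] //= _|[|[|i]] hi //=]; [by rewrite adjC | exact: gdistxx].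
have hd k : d b (r k) = 1 + k by rewrite (ray_gdist_incr b gr hd1 k) r0 dba.
exists (concat_walk p r 1); split => //; split => //.
apply: end_same_tail_closed hr (concat_ray gp gr r0 hd) _.
by exists 0, 1 => n; rewrite addn0 addnC concat_walk_end // r0.
Qed.

Lemma fwd_rev_disj (w : End) a b : fwd adj (a, b) w -> fwd adj (b, a) w -> False.
Proof.
move=> [r [hr r1]] [s [hs s1]] /=; simpl in *.
rewrite -r1 in hs; have e := ray_to_unique (ray_to_shift 1 hr) hs.
have e2 : r 2 = r 0 by rewrite -[r 2]/(shift 1 r 1) e s1; case: hr.
by move: (ray_nonbacktracking 0 (end_ray hr.1)); rewrite e2 eqxx.
Qed.

Lemma setC_fwd a b : adj a b -> ~` fwd adj (a, b) = fwd adj (b, a).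
Proof.
move=> hab; apply/seteqP; split => w /=; last by move=> h1 h2; apply: (fwd_rev_disj h2 h1).
by move=> h; case: (fwd_or_rev w hab).
Qed.

Lemma fwd_open e : oedge adj e -> end_open (fwd adj e).
Proof. by move=> he w hw; exists e; split. Qed.

Lemma fwd_clopen e : oedge adj e -> end_clopen (fwd adj e).
Proof.
case: e => a b he; split; first exact: fwd_open.
by rewrite setC_fwd //; apply: fwd_open; rewrite /oedge /= adjC.
Qed.

Lemma ray_to_gdist_succ {w : End} {a r} k : ray_to w a r -> d a (r k.+1) = (d a (r k)).+1.
Proof. by move=> [h r0]; rewrite -r0 !(ray_gdist (end_ray h) (leq0n _)); lia. Qed.

Lemma fwd_ray_sub {w : End} {a r} k : ray_to w a r ->
  fwd adj (r k, r k.+1) `<=` fwd adj (a, r 1).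
Proof.
move=> hr w' hw'; case: (ray_to_exists w' a) => r' hr'.
have hadj : adj (r k) (r k.+1) by apply: ray_adj (end_ray hr.1).
have [e1 e2] := ray_to_fwd hadj (ray_to_gdist_succ k hr) hw' hr'.
have ga : geodesic a r k.+1 by case: hr => h <-; apply: ray_geodesic (end_ray h).
have ga' : geodesic a r' k.+1 by case: hr' => h <-; apply: ray_geodesic (end_ray h).
have dk : d a (r k) = k by case: ga => _ _ ->.
rewrite dk in e1 e2; have := geodesic_unique ga' ga e2 1 (ltn0Sn _) => e.
by exists r'; split => //; rewrite e.
Qed.

Lemma fwd_ray_eventually_sub {w : End} {x r} a b : ray_to w x r -> fwd adj (a, b) w ->
  exists N, forall n, N <= n -> fwd adj (r n, r n.+1) `<=` fwd adj (a, b).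
Proof.
move=> hr [s [hs /= s1]]; case: (end_same_tail hr.1 hs.1) => al [be h].
exists al => n hn.
have e1 : r n = s (n - al + be) by rewrite -h subnK.
have e2 : r n.+1 = s (n - al + be).+1.
  have -> : (n - al + be).+1 = (n.+1 - al) + be by lia.
  by rewrite -h subnK //; lia.
by rewrite e1 e2 -s1; exact: fwd_ray_sub hs.
Qed.

Lemma end_openI (U U' : set End) : end_open U -> end_open U' -> end_open (U `&` U').
Proof.
move=> hU hU' w [hw hw'].
case: (hU w hw) => [[a b]] [_ hf hs]; case: (hU' w hw') => [[a' b']] [_ hf' hs'].
case: (end_nonempty w) => r hw0; have hr : ray_to w (r 0) r by [].
case: (fwd_ray_eventually_sub hr hf) => N hN.
case: (fwd_ray_eventually_sub hr hf') => N' hN'.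
set n := maxn N N'; exists (r n, r n.+1); split.
- exact: ray_adj (end_ray hw0).
- by have := fwd_ray (ray_to_shift n hr); rewrite /shift addn1.
- by move=> w'' h; split; [apply/hs/(hN n _ _ h) | apply/hs'/(hN' n _ _ h)];
    rewrite ?leq_maxl ?leq_maxr.
Qed.

Lemma end_openU (U U' : set End) : end_open U -> end_open U' -> end_open (U `|` U').
Proof.
move=> hU hU' w [hw|hw].
  by case: (hU w hw) => e [he hf hs]; exists e; split => // w' /hs; left.
by case: (hU' w hw) => e [he hf hs]; exists e; split => // w' /hs; right.
Qed.

Lemma end_clopenU (U U' : set End) : end_clopen U -> end_clopen U' -> end_clopen (U `|` U').
Proof.
by case=> h1 h2 [h1' h2']; split; [exact: end_openU | rewrite setCU; exact: end_openI].
Qed.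
Lemma end_clopenI (U U' : set End) : end_clopen U -> end_clopen U' -> end_clopen (U `&` U').
Proof.
by case=> h1 h2 [h1' h2']; split; [exact: end_openI | rewrite setCI; exact: end_openU].
Qed.

Lemma end_clopen0 : end_clopen (@set0 End).
Proof.
split; first by move=> w [].
move=> w _; case: (end_nonempty w) => r hr; exists (r 0, r 1); split => //.
- exact: ray_adj (end_ray hr).
- exact: (@fwd_ray w (r 0) r).
- by move=> w' _ [].
Qed.

Lemma bigsetU_seqP {I : eqType} (s : seq I) (F : I -> set End) w :
  (\big[setU/set0]_(i <- s) F i) w <-> exists2 i, i \in s & F i w.
Proof.
elim: s => [|i s IH]; first by rewrite big_nil; split => // -[].
rewrite big_cons; split.
  by case=> [hw|/IH [j hj hw]]; [exists i; rewrite ?mem_head | exists j; rewrite ?inE ?hj ?orbT].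
by case=> j; rewrite inE => /orP [/eqP -> | hj] hw; [left | right; apply/IH; exists j].
Qed.

Lemma bigsetU_clopen {I : eqType} (s : seq I) (F : I -> set End) :
  (forall i, i \in s -> end_clopen (F i)) -> end_clopen (\big[setU/set0]_(i <- s) F i).
Proof.
by move=> h; rewrite big_seq; apply: big_ind => //; [exact: end_clopen0 | exact: end_clopenU].
Qed.

Lemma horo_fwd {w : End} x y a b : adj a b ->
  d x b = (d x a).+1 -> d y b = (d y a).+1 ->
  fwd adj (a, b) w -> horo w x y = ((d x a)%:Z - (d y a)%:Z)%R.
Proof.
move=> hab hx hy hf; rewrite /horo; set v := epsilon _ _.
have hv : on_both_rays w x y v.
  apply: epsilon_spec.
  case: (ray_to_exists w x) => r hr; case: (ray_to_exists w y) => r' hr'.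
  have [ea1 _] := ray_to_fwd hab hx hf hr; have [ea2 _] := ray_to_fwd hab hy hf hr'.
  by exists a, r, r'; split => //; exists (d x a), (d y a).
case: hv => r [r' [hr hr' [i [j [ri rj]]]]].
have [ea1 _] := ray_to_fwd hab hx hf hr; have [ea2 _] := ray_to_fwd hab hy hf hr'.
have gr := end_ray hr.1; have gr' := end_ray hr'.1.
have dxv : d x v = i by rewrite -ri -hr.2 (ray_gdist gr (leq0n i)) subn0.
have dyv : d y v = j by rewrite -rj -hr'.2 (ray_gdist gr' (leq0n j)) subn0.
have agree k l u : r k = u -> r' l = u -> forall t, r (k + t) = r' (l + t).
  move=> rk rl t; have h1 := ray_to_shift k hr; have h2 := ray_to_shift l hr'.
  by rewrite rk in h1; rewrite rl in h2; rewrite -[r (k + t)]/(shift k r t) (ray_to_unique h1 h2).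
rewrite dxv dyv; case: (leqP i (d x a)) => hi.
  have := agree _ _ _ ri rj (d x a - i); rewrite subnKC // ea1 -{1}ea2.
  by move/esym/(ray_inj gr'); lia.
have := agree _ _ _ ea1 ea2 (i - d x a); rewrite subnKC; last by lia.
by rewrite ri -rj => /(ray_inj gr'); lia.
Qed.

(** * Finitely additive set functions *)

Section FiniteAdditivity.
Variable mu : set End -> CC.
Hypothesis muFA : is_FA mu.
Local Open Scope ring_scope.

Lemma FA_set0 : mu set0 = 0.
Proof.
have := muFA end_clopen0 end_clopen0 (setI0 set0); rewrite setU0 => h.
by apply: (@addrI _ (mu set0)); rewrite addr0.
Qed.

Lemma FA_bigsetU {I : eqType} (s : seq I) (F : I -> set End) : uniq s ->
  (forall i, i \in s -> end_clopen (F i)) ->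
  {in s &, forall i j, i != j -> F i `&` F j = set0} ->
  mu (\big[setU/set0]_(i <- s) F i) = \sum_(i <- s) mu (F i).
Proof.
elim: s => [|i s IH]; first by rewrite !big_nil FA_set0.
rewrite /= => /andP [his hu] hc hd; rewrite !big_cons.
have hc' j : j \in s -> end_clopen (F j) by move=> hj; apply: hc; rewrite inE hj orbT.
have hi : end_clopen (F i) by apply: hc; rewrite mem_head.
rewrite muFA ?IH //; first by move=> j k hj hk; apply: hd; rewrite inE ?hj ?hk orbT.
  exact: bigsetU_clopen.
apply/seteqP; split => // w [hw /bigsetU_seqP [j hj hw']].
have : F i `&` F j = set0.
  apply: hd; rewrite ?mem_head ?inE ?hj ?orbT //.
  by apply/eqP => e; move: his; rewrite e hj.
by move/seteqP => [/(_ w (conj hw hw'))].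
Qed.

Lemma lc_partition_setI (f : End -> CC) A n P c B :
  lc_partition f A (existT _ n (P, c)) -> end_clopen B -> B `<=` A ->
  mu B = \sum_(j < n) mu (B `&` P j).
Proof.
case=> /= hP hdisj hcov _ hB hBA.
have {1}-> : B = \big[setU/set0]_(j < n) (B `&` P j).
  apply/seteqP; split => w.
    by move=> hw; have [j hj] := (hcov w).1 (hBA w hw); apply/bigsetU_seqP; exists j.
  by case/bigsetU_seqP => j _ [].
rewrite FA_bigsetU ?index_enum_uniq // => [j _|i j _ _ hij]; first exact: end_clopenI.
by rewrite setIACA hdisj // setI0.
Qed.

(* Both sums equal the sum over the common refinement [P i `&` Q j]. *)
Lemma fa_integralE (f : End -> CC) A n P c :
  lc_partition f A (existT _ n (P, c)) ->
  fa_integral mu f A = \sum_(i < n) c i * mu (P i).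
Proof.
move=> hPc; rewrite /fa_integral; set t := epsilon _ _.
have : lc_partition f A t by apply: epsilon_spec; exists (existT _ n (P, c)).
case: t => m [Q c'] hQc /=.
have refine n1 P1 c1 n2 P2 c2 : lc_partition f A (existT _ n1 (P1, c1)) ->
    lc_partition f A (existT _ n2 (P2, c2)) ->
    \sum_(i < n1) c1 i * mu (P1 i) = \sum_(i < n1) \sum_(j < n2) c1 i * mu (P1 i `&` P2 j).
  move=> [/= hP1 _ hcov1 _] h2; apply: eq_bigr => i _; rewrite -mulr_sumr.
  by rewrite (lc_partition_setI h2 (hP1 i)) // => w hw; apply/hcov1; exists i.
rewrite (refine _ _ _ _ _ _ hQc hPc) (refine _ _ _ _ _ _ hPc hQc) exchange_big /=.
apply: eq_bigr => i _; apply: eq_bigr => j _; rewrite setIC.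
have [[w [hw1 hw2]]|hne] := pselect (exists w, (P i `&` Q j) w).
  by case: hPc => _ _ _ /= /(_ i w hw1) <-; case: hQc => _ _ _ /= /(_ j w hw2) <-.
have -> : P i `&` Q j = set0 by apply/seteqP; split => // w hw; apply: hne; exists w.
by rewrite FA_set0 !mulr0.
Qed.

End FiniteAdditivity.

(** * Shadows and compactness *)

Section Shadows.
Variable o : V.

Lemma parent_exists v : 0 < d o v -> exists p, adj p v /\ d o v = (d o p).+1.
Proof.
move=> hv; case: (geodesic_exists o v) => p [[p0 pw pd] pn].
exists (p (d o v).-1); split; last by rewrite pd ?prednK // leq_pred.
by have := pw (d o v).-1 ltac:(lia); rewrite prednK // pn.
Qed.

Definition shadow (v : V) : set End := [set w | exists r, ray_to w o r /\ r (d o v) = v].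

Lemma ray_to_gdist {w : End} {r} k : ray_to w o r -> d o (r k) = k.
Proof. by case=> h r0; rewrite -{1}r0 (ray_gdist (end_ray h) (leq0n k)) subn0. Qed.

Lemma shadow_fwd p v : adj p v -> d o v = (d o p).+1 -> shadow v = fwd adj (p, v).
Proof.
move=> hpv e; apply/seteqP; split => w hw; last first.
  case: (ray_to_exists w o) => r hr; exists r; split => //.
  by have [_ h2] := ray_to_fwd hpv e hw hr; rewrite e.
case: hw => r [hr rv].
have hp : r (d o p) = p.
  have a1 : adj (r (d o p)) v by rewrite -rv e; apply: ray_adj (end_ray hr.1).
  by apply: (parent_unique o a1 hpv) => //; rewrite (ray_to_gdist _ hr).
by have := fwd_ray (ray_to_shift (d o p) hr); rewrite /shift addn1 -e rv hp.
Qed.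

Lemma shadow_disj u v : d o u = d o v -> u != v -> shadow u `&` shadow v = set0.
Proof.
move=> e ne; apply/seteqP; split => // w [[r [hr ru]] [r' [hr' rv]]].
by move: ne; rewrite -ru -rv e (ray_to_unique hr hr') eqxx.
Qed.

Lemma shadow_clopen v : 0 < d o v -> end_clopen (shadow v).
Proof.
by move=> /parent_exists [p [hpv e]]; rewrite (shadow_fwd hpv e); exact: (@fwd_clopen (p, v)).
Qed.

Lemma shadow_cover (w : End) N : exists v, d o v = N /\ shadow v w.
Proof.
case: (ray_to_exists w o) => r hr; exists (r N); split; first exact: ray_to_gdist hr.
by exists r; rewrite (ray_to_gdist _ hr).
Qed.

Definition geodesic_to u : nat -> V := proj1_sig (cid (geodesic_exists o u)).

Lemma geodesic_toP u : geodesic o (geodesic_to u) (d o u) /\ geodesic_to u (d o u) = u.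
Proof. exact: proj2_sig (cid (geodesic_exists o u)). Qed.

Lemma gdist_geodesic_to u k : k <= d o u -> d o (geodesic_to u k) = k.
Proof. by move=> hk; case: (geodesic_toP u) => [[_ _ ->]]. Qed.

Lemma geodesic_to_ancestor u j k : j <= k -> k <= d o u ->
  geodesic_to (geodesic_to u k) j = geodesic_to u j.
Proof.
move=> hjk hk; case: (geodesic_toP (geodesic_to u k)) => g1 e1.
rewrite gdist_geodesic_to // in g1 e1.
by apply: (geodesic_unique g1 (geodesic_prefix (geodesic_toP u).1 hk)).
Qed.

Lemma shadow_ancestor u k : k <= d o u -> shadow u `<=` shadow (geodesic_to u k).
Proof.
move=> hk w [r [hr ru]]; exists r; split => //; rewrite gdist_geodesic_to //.
have gr : geodesic o r (d o u) by case: hr => h <-; apply: ray_geodesic (end_ray h).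
by case: (geodesic_toP u) => gu eu; apply: (geodesic_unique gr gu); rewrite ?ru.
Qed.

Hypothesis locfin : locally_finite adj.

Lemma neighbours_exist : exists nb : V -> seq V, forall x y, adj x y -> y \in nb x.
Proof. by apply: (choice (fun x s => forall y, adj x y -> y \in s)) => x; apply: locfin. Qed.

Lemma sphere_enum N : exists s, uniq s /\ forall v, (v \in s) = (d o v == N).
Proof.
case: neighbours_exist => nb hnb; elim: N => [|N [s [us hs]]].
  exists [:: o]; split => // v; rewrite inE.
  case: (eqVneq v o) => [->|ne]; first by rewrite gdistxx.
  by apply/esym/negP => /eqP /gdist_eq0 e; move: ne; rewrite e eqxx.
exists (undup [seq v <- flatten (map nb s) | d o v == N.+1]); split; first exact: undup_uniq.
move=> v; rewrite mem_undup mem_filter andb_idr // => /eqP hv.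
have [p [hpv e]] : exists p, adj p v /\ d o v = (d o p).+1 by apply: parent_exists; lia.
by apply/flatten_mapP; exists p; [rewrite hs; apply/eqP; lia | exact: hnb].
Qed.

Section Konig.
Variable A : set End.
Hypothesis clA : end_clopen A.

Definition mixed v := (exists w, shadow v w /\ A w) /\ (exists w, shadow v w /\ ~ A w).

(* [geodesic_to u (d o v) = v] says that [u] descends from [v]. *)
Definition deep_mixed v :=
  forall N, d o v <= N -> exists u, [/\ d o u = N, geodesic_to u (d o v) = v & mixed u].

Lemma mixed_ancestor u k : mixed u -> k <= d o u -> mixed (geodesic_to u k).
Proof.
move=> [[w1 [h1 a1]] [w2 [h2 a2]]] hk.
by split; [exists w1 | exists w2]; split => //; apply: shadow_ancestor.
Qed.

(* König's lemma: [v] has only finitely many children. *)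
Lemma deep_mixed_child v : deep_mixed v ->
  exists c, [/\ adj v c, d o c = (d o v).+1 & deep_mixed c].
Proof.
move=> hv; apply/not_existsP => hno; case: neighbours_exist => nb hnb.
have [f hf] : exists f : V -> nat, forall c, adj v c -> d o c = (d o v).+1 ->
    d o c <= f c /\ ~ exists u, [/\ d o u = f c, geodesic_to u (d o c) = c & mixed u].
  apply: (choice (fun c N => adj v c -> d o c = (d o v).+1 ->
    d o c <= N /\ ~ exists u, [/\ d o u = N, geodesic_to u (d o c) = c & mixed u])) => c.
  case: (pselect (adj v c /\ d o c = (d o v).+1)) => [[h1 h2]|hn]; last first.
    by exists 0 => h1 h2; exfalso; apply: hn.
  have : ~ deep_mixed c by move=> hc; apply: (hno c).
  by move/existsNP => [N /not_implyP [hN hN']]; exists N.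
set N := (\max_(c <- nb v) f c) + (d o v).+1.
case: (hv N ltac:(rewrite /N; lia)) => u [du gu mu].
set c := geodesic_to u (d o v).+1.
have hc1 : d o c = (d o v).+1 by rewrite gdist_geodesic_to // du /N; lia.
have hc0 : adj v c.
  by case: (geodesic_toP u) => [[_ pw _] _]; rewrite -gu /c; apply: pw; rewrite du /N; lia.
have [hfc hno'] := hf c hc0 hc1.
have hfN : f c <= N.
  by have := @leq_bigmax_seq _ (nb v) xpredT f c (hnb _ _ hc0) erefl; rewrite /N; lia.
apply: hno'; exists (geodesic_to u (f c)); split.
- by rewrite gdist_geodesic_to // du.
- by rewrite geodesic_to_ancestor // ?hc1 // du.
- by apply: mixed_ancestor; rewrite // du.
Qed.

Lemma deep_mixed_ray : deep_mixed o ->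
  exists r, [/\ geod_ray adj r, r 0 = o & forall n, mixed (r n)].
Proof.
move=> ho.
have [nx hnx] : exists nx : V -> V, forall v, deep_mixed v ->
    [/\ adj v (nx v), d o (nx v) = (d o v).+1 & deep_mixed (nx v)].
  apply: (choice (fun v c => deep_mixed v -> [/\ adj v c, d o c = (d o v).+1 & deep_mixed c])).
  move=> v; case: (pselect (deep_mixed v)) => h; last by exists v.
  by case: (deep_mixed_child h) => c hc; exists c.
pose r n := iter n nx o.
have hr n : deep_mixed (r n) /\ d o (r n) = n.
  elim: n => [|n [IH1 IH2]]; first by rewrite /r /= gdistxx.
  by case: (hnx _ IH1) => _ h2 h3; rewrite /r /= -/(r n) h2 IH2.
have ha n : adj (r n) (r n.+1) by case: (hnx _ (hr n).1).
exists r; split => // [i k|n].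
  apply/eqP; rewrite eqn_leq; apply/andP; split.
    by have := gdist_walk_sub (fun j _ => ha j) (leq_addr k i) (leqnn _); rewrite addKn.
  by have := gdist_triangle o (r i) (r (i + k)); rewrite (hr i).2 (hr (i + k)).2; lia.
case: (hr n) => h1 h2; case: (h1 n) => [|u [du gu mu]]; first by rewrite h2.
by move: gu; rewrite h2 -du; case: (geodesic_toP u) => _ -> <-.
Qed.

Lemma no_mixed_ray r : geod_ray adj r -> r 0 = o -> (forall n, mixed (r n)) -> False.
Proof.
move=> gr r0 mix; pose w := end_of_ray gr.
have hrw : ray_to w o r by split; [exact: end_of_rayP | by []].
have [U [hU hUw hmix]] : exists U, [/\ end_open U, U w &
    forall v, mixed v -> exists w', shadow v w' /\ ~ U w'].
  case: clA => hA hA'; case: (pselect (A w)) => hw.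
    by exists A; split => // v [_ [w2 h2]]; exists w2.
  by exists (~` A); split => // v [[w1 [h1 a1]] _]; exists w1; split => // /(_ a1).
case: (hU w hUw) => [[a b]] [_ hf hs].
case: (fwd_ray_eventually_sub hrw hf) => N hN.
case: (hmix _ (mix N.+1)) => w' [hw' nw']; apply/nw'/hs/(hN N (leqnn _)).
by rewrite -(shadow_fwd (ray_adj N gr)) // !(ray_to_gdist _ hrw).
Qed.

(* Compactness of the space of ends. *)
Lemma clopen_unmixed_level M : exists N, M <= N /\ forall v, d o v = N -> ~ mixed v.
Proof.
apply/not_existsP => hbad.
have hb N : M <= N -> exists v, d o v = N /\ mixed v.
  move=> hN; apply: contrapT => hn; apply: (hbad N); split => // v hv hm.
  by apply: hn; exists v.
have [r [gr r0 mix]] : exists r, [/\ geod_ray adj r, r 0 = o & forall n, mixed (r n)].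
  apply: deep_mixed_ray => N _; case: (hb (maxn N M) (leq_maxr _ _)) => v [dv mv].
  exists (geodesic_to v N); split.
  - by rewrite gdist_geodesic_to // dv leq_maxl.
  - by rewrite gdistxx; case: (geodesic_toP (geodesic_to v N)) => [[]].
  - by apply: mixed_ancestor; rewrite // dv leq_maxl.
exact: no_mixed_ray gr r0 mix.
Qed.

End Konig.

Lemma clopen_shadow_decomposition B M : end_clopen B -> exists G : seq V, [/\ uniq G,
  forall v, v \in G -> M <= d o v /\ shadow v `<=` B,
  {in G &, forall u v, d o u = d o v} & B = \big[setU/set0]_(v <- G) shadow v].
Proof.
move=> hB; case: (clopen_unmixed_level hB M) => N [hN hres].
case: (sphere_enum N) => s [us hs].
exists [seq v <- s | `[< shadow v `<=` B >]]; split.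
- exact: filter_uniq.
- by move=> v; rewrite mem_filter hs => /andP [/asboolP h1 /eqP ->].
- by move=> u v; rewrite !mem_filter !hs => /andP [_ /eqP ->] /andP [_ /eqP ->].
apply/seteqP; split => w; last first.
  by case/bigsetU_seqP => v; rewrite mem_filter => /andP [/asboolP h _] /h.
move=> hw; case: (shadow_cover w N) => v [dv cv]; apply/bigsetU_seqP; exists v => //.
rewrite mem_filter hs dv eqxx andbT; apply/asboolP => w' cw'.
by apply: contrapT => nw'; apply: (hres v dv); split; [exists w | exists w'].
Qed.

End Shadows.

(** * Automorphisms and the twisted action *)

Section Automorphism.
Variables (g ginv : V -> V).
Hypothesis aut : is_aut adj g ginv.

Lemma autK : cancel g ginv. Proof. by case: aut. Qed.
Lemma autVK : cancel ginv g. Proof. by case: aut. Qed.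
Lemma aut_adj x y : adj (g x) (g y) = adj x y. Proof. by case: aut. Qed.
Lemma autV_adj x y : adj (ginv x) (ginv y) = adj x y. Proof. by rewrite -aut_adj !autVK. Qed.

Lemma gdist_hom_le (h : V -> V) : (forall x y, adj (h x) (h y) = adj x y) ->
  forall x y, d (h x) (h y) <= d x y.
Proof.
move=> hh x y; case: (shortest_walk x y) => p [p0 pn pw].
have hw : is_walk (h \o p) (d x y) by move=> i hi /=; rewrite hh; apply: pw.
by have := gdist_walk_le hw; rewrite /= p0 pn.
Qed.

Lemma gdist_aut x y : d (g x) (g y) = d x y.
Proof.
apply/eqP; rewrite eqn_leq (@gdist_hom_le g aut_adj) /=.
by have := @gdist_hom_le ginv autV_adj (g x) (g y); rewrite !autK.
Qed.

Lemma gdist_autV x y : d (ginv x) (ginv y) = d x y.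
Proof. by rewrite -gdist_aut !autVK. Qed.

Lemma gdist_autV_r x y : d x (ginv y) = d (g x) y.
Proof. by rewrite -gdist_aut autVK. Qed.

Lemma same_tail_comp (f : V -> V) r r' : same_tail r r' -> same_tail (f \o r) (f \o r').
Proof. by case=> a [b h]; exists a, b => n /=; rewrite h. Qed.

Lemma aut_ray r : geod_ray adj r -> geod_ray adj (g \o r).
Proof. by move=> h i k /=; rewrite gdist_aut. Qed.

Lemma autV_ray r : geod_ray adj r -> geod_ray adj (ginv \o r).
Proof. by move=> h i k /=; rewrite gdist_autV. Qed.

Definition end_rep (w : End) : nat -> V := proj1_sig (cid (end_nonempty w)).

Lemma end_repP w : rays w (end_rep w).
Proof. exact: proj2_sig (cid (end_nonempty w)). Qed.

Definition aut_end (w : End) : End := end_of_ray (aut_ray (end_ray (end_repP w))).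

Lemma aut_endP {w r} : rays w r -> rays (aut_end w) (g \o r).
Proof.
move=> h; apply: end_same_tail_closed (end_of_rayP _) (aut_ray (end_ray h)) _.
exact/same_tail_comp/(end_same_tail (end_repP w) h).
Qed.

Lemma end_preimE (A : set End) : end_preim g A = aut_end @^-1` A.
Proof.
apply/seteqP; split => w /=.
  by case=> w' [hA [r [hr hr']]]; rewrite -(end_eq hr' (aut_endP hr)).
move=> h; exists (aut_end w); split => //.
by exists (end_rep w); split; [exact: end_repP | exact: aut_endP (end_repP w)].
Qed.

Lemma fwd_aut_end a b w : fwd adj (g a, g b) (aut_end w) <-> fwd adj (a, b) w.
Proof.
split; last first.
  by case=> r [[hr r0] r1]; exists (g \o r); split; [split; [exact: aut_endP|] |];
    rewrite /= ?r0 ?r1.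
case=> s [[hs s0] s1]; exists (ginv \o s); split; [split|] => /=; last by rewrite s1 autK.
  apply: end_same_tail_closed (end_repP w) (autV_ray (end_ray hs)) _.
  case: (same_tail_comp ginv (end_same_tail (aut_endP (end_repP w)) hs)) => x [y t].
  by exists x, y => n; rewrite -t /= autK.
by rewrite s0 autK.
Qed.

Lemma end_preim_fwd a b : end_preim g (fwd adj (a, b)) = fwd adj (ginv a, ginv b).
Proof.
rewrite end_preimE; apply/seteqP.
by split => w /=; rewrite -[fwd _ (ginv a, _) _]fwd_aut_end !autVK.
Qed.

Lemma end_preim_open (U : set End) : end_open U -> end_open (end_preim g U).
Proof.
rewrite end_preimE => hU w /hU [[a b]] [he hf hs].
exists (ginv a, ginv b); split.
- by rewrite /oedge /= autV_adj.
- by rewrite -fwd_aut_end !autVK.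
- by move=> w' hw'; apply: hs; rewrite -(autVK a) -(autVK b) fwd_aut_end.
Qed.

Lemma end_preim_clopen (U : set End) : end_clopen U -> end_clopen (end_preim g U).
Proof.
case=> h1 h2; split; first exact: end_preim_open.
by have := end_preim_open h2; rewrite !end_preimE preimage_setC.
Qed.

Lemma fa_act_FA (mu : set End -> CC) : is_FA mu -> is_FA (fa_act g mu).
Proof.
move=> muFA A B hA hB hAB; rewrite /fa_act !end_preimE preimage_setU.
apply: muFA; try by rewrite -end_preimE; exact: end_preim_clopen.
by rewrite -preimage_setI hAB preimage_set0.
Qed.

Variables (o : V) (z : CC) (nu : set End -> CC).
Hypothesis nuFA : is_FA nu.
Local Open Scope ring_scope.

Lemma cocycle_fwd w a b : adj a b ->
  d (g o) b = (d (g o) a).+1 -> d o b = (d o a).+1 -> fwd adj (a, b) w ->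
  cocycle adj o z g w = z ^ ((d (g o) a)%:Z - (d o a)%:Z).
Proof. by move=> hab h1 h2 hf; rewrite /cocycle (horo_fwd _ _ hab h1 h2 hf). Qed.

(* On a forward set pointing away from both [o] and [g o] the cocycle is constant. *)
Lemma pi_z_fwd a b : adj a b ->
  d (g o) b = (d (g o) a).+1 -> d o b = (d o a).+1 ->
  pi_z o z g nu (fwd adj (a, b)) =
    z ^ ((d (g o) a)%:Z - (d o a)%:Z) * nu (fwd adj (ginv a, ginv b)).
Proof.
move=> hab hgo ho; rewrite /pi_z (@fa_integralE _ (fa_act_FA nuFA) _ _ 1
  (fun _ => fwd adj (a, b)) (fun _ => z ^ ((d (g o) a)%:Z - (d o a)%:Z))).
  by rewrite big_ord1 /fa_act end_preim_fwd.
split => /=.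
- by move=> _; apply: fwd_clopen.
- by move=> i j; rewrite !ord1 eqxx.
- by move=> w; split => [hw|[]//]; exists ord0.
- by move=> _ w; apply: cocycle_fwd.
Qed.

Hypothesis z0 : z != 0.

Lemma pi_z_invariant_edge_condition :
  (forall A : set End, end_clopen A -> pi_z o z g nu A = nu A) ->
  forall e : V * V, oedge adj e -> points_away adj o e -> points_away adj (ginv o) e ->
    z ^+ d o e.1 * nu (fwd adj e) = z ^+ d o (edge_act g e).1 * nu (fwd adj (edge_act g e)).
Proof.
move=> inv [a b]; rewrite /oedge /points_away /edge_act /= => hab ho hgo.
have hgab : adj (g a) (g b) by rewrite aut_adj.
have := inv _ (@fwd_clopen (g a, g b) hgab).
rewrite pi_z_fwd // ?autK.
- by rewrite gdist_aut => /expfz_subn_mulE ->.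
- by rewrite !gdist_aut.
- by rewrite -(autVK o) !gdist_aut.
Qed.

Hypothesis edge_condition : forall e : V * V,
  oedge adj e -> points_away adj o e -> points_away adj (ginv o) e ->
  z ^+ d o e.1 * nu (fwd adj e) = z ^+ d o (edge_act g e).1 * nu (fwd adj (edge_act g e)).

Section DeepShadow.
Variable v : V.
Hypothesis deep : (d o (g o) < d o v)%N.

Lemma deep_parent_exists : exists p, [/\ adj p v, d o v = (d o p).+1 & d (g o) v = (d (g o) p).+1].
Proof.
have [p [hpv e]] : exists p, adj p v /\ d o v = (d o p).+1 by apply: parent_exists; lia.
by exists p; split => //; apply: (points_away_closer o (g o) hpv e); lia.
Qed.

Lemma cocycle_shadow w : shadow o v w ->
  cocycle adj o z g w = z ^ ((d (g o) v)%:Z - (d o v)%:Z).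
Proof.
case: deep_parent_exists => p [hpv e hgo]; rewrite (shadow_fwd o hpv e) => hw.
by rewrite (cocycle_fwd hpv hgo e hw) hgo e; congr (_ ^ _); lia.
Qed.

Lemma twisted_shadow_invariant :
  z ^ ((d (g o) v)%:Z - (d o v)%:Z) * nu (end_preim g (shadow o v)) = nu (shadow o v).
Proof.
case: deep_parent_exists => p [hpv e hgo].
rewrite (shadow_fwd o hpv e) end_preim_fwd.
have := @edge_condition (ginv p, ginv v).
rewrite /oedge /points_away /edge_act /= !autVK autV_adj !gdist_autV !gdist_autV_r.
move=> /(_ hpv hgo e) /expfz_subn_mulE <- //.
by rewrite hgo e; congr (_ ^ _ * _); lia.
Qed.

End DeepShadow.

Hypothesis locfin : locally_finite adj.

Lemma edge_condition_pi_z_invariant A : end_clopen A -> pi_z o z g nu A = nu A.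
Proof.
move=> hA.
case: (clopen_shadow_decomposition o locfin (d o (g o)).+1 hA) => G [uG hG hGd eA].
have deepG (i : 'I_(size G)) : (d o (g o) < d o (nth o G i))%N.
  by case: (hG _ (mem_nth o (ltn_ord i))).
set c := fun v => z ^ ((d (g o) v)%:Z - (d o v)%:Z).
have hpart : lc_partition (cocycle adj o z g) A (existT _ (size G)
    (fun i : 'I_(size G) => shadow o (nth o G i), fun i : 'I_(size G) => c (nth o G i))).
  split => /=.
  - by move=> i; apply: shadow_clopen; have := deepG i; lia.
  - move=> i j hij; apply: shadow_disj; first by apply: hGd; exact: mem_nth.
    by rewrite nth_uniq.
  - move=> w; rewrite eA; split => [/bigsetU_seqP [v hv hw] | [i hw]].
      have hi : (index v G < size G)%N by rewrite index_mem.
      by exists (Ordinal hi); rewrite /= nth_index.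
    by apply/bigsetU_seqP; exists (nth o G i); rewrite ?mem_nth.
  - by move=> i w; apply: cocycle_shadow.
rewrite /pi_z (fa_integralE (fa_act_FA nuFA) hpart) eA FA_bigsetU //.
- by rewrite (big_nth o) big_mkord; apply: eq_bigr => i _; apply: twisted_shadow_invariant.
- by move=> v /hG [hv _]; apply: shadow_clopen; lia.
- by move=> u v hu hv; apply: shadow_disj; apply: hGd.
Qed.

End Automorphism.

End Tree.

Unset Implicit Arguments.
Local Open Scope ring_scope.

Theorem mainTheorem18 (V : eqType) (adj : rel V) (o : V)
  (Htree : is_tree adj) (Hlf : locally_finite adj) (Hleaf : no_leaves adj)
  (z : CC) (Hz : z != 0)
  (nu : set (End adj) -> CC) (Hnu : is_FA nu)
  (g ginv : V -> V) (Hg : is_aut adj g ginv) :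
  (forall A : set (End adj), end_clopen A -> pi_z o z g nu A = nu A) <->
  (forall e : V * V, oedge adj e -> points_away adj o e -> points_away adj (ginv o) e ->
     z ^+ gdist adj o e.1 * nu (fwd adj e)
     = z ^+ gdist adj o (edge_act g e).1 * nu (fwd adj (edge_act g e))).
Proof.
split => [inv e | hedge A hA].
  exact: (pi_z_invariant_edge_condition Htree Hg Hnu Hz inv).
exact: (edge_condition_pi_z_invariant Htree Hg z Hnu Hz hedge Hlf hA).
Qed.
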